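(* Let $\mathbb{F}$ be a finite field with $q$ elements, let $\mathbb{M}$ be the group of complex-valued characters of $\mathbb{F}^*$, and define for $\alpha,\beta\in\mathbb{M}$ \[ \mathbb{J}(\alpha,\beta)=\frac{1}{q-1}\sum_{\substack{x+y=1,\\ x,y\in\mathbb{F}^*}}\alpha(x)\beta(y). \] Then for all $\alpha_1,\alpha_2,\alpha_3,\alpha_4\in\mathbb{M}$, \[ \sum_{\beta\in\mathbb{M}}\mathbb{J}(\alpha_1\beta,\alpha_2\beta^{-1})\,\mathbb{J}(\alpha_3\beta,\alpha_4\beta^{-1})=\mathbb{J}(\alpha_1\alpha_4,\alpha_2\alpha_3). \]
   Context: Products and inverses of characters are pointwise. *)

From mathcomp Require Import all_boot all_algebra all_fingroup all_field all_character.
Set Implicit Arguments. Unset Strict Implicit. Unset Printing Implicit Defensive.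
Import GRing.Theory Num.Theory.
Local Open Scope ring_scope.

(* The multiplicative group F^* of a finite field F is the finGroupType {unit F};
   its characters are class functions on [set: {unit F}] (values in algC). *)
Notation Fstar F := [set: {unit F}].

Definition jacobiJ (F : finFieldType) (a b : {unit F} -> algC) : algC :=
  ((#|F|.-1)%:R)^-1 *
  \sum_(x : {unit F}) \sum_(y : {unit F} | val x + val y == 1) a x * b y.

From mathcomp Require Import all_boot all_algebra all_fingroup all_field all_character.
From mathcomp Require Import cyclic ring.
Import GRing.Theory Num.Theory.
Local Open Scope ring_scope.

(* Expanding both Jacobi sums, the sum over beta of beta(x u) / beta(y v) is
   (q-1) [x u = y v] by column orthogonality for the abelian group F^*. On the
   line x + y = 1 = u + v, the equation x u = y v reads x + u = 1, i.e.
   (u, v) = (y, x), so the double sum collapses onto the diagonal terms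
   alpha1(x) alpha2(y) alpha3(y) alpha4(x), which add up to
   (q-1) J(alpha1 alpha4, alpha2 alpha3). *)

Lemma sum_irr_mulV_abelian (gT : finGroupType) (G : {group gT}) (x y : gT) :
  abelian G -> x \in G -> y \in G ->
  \sum_(i : Iirr G) 'chi_i x * ('chi_i y)^-1 = #|G|%:R *+ (x == y).
Proof.
move=> cGG Gx Gy; have lin_irr := char_abelianP G cGG.
rewrite eq_mulgV1 -cfRegE cfReg_sum sum_cfunE; apply: eq_bigr => i _.
by rewrite cfunE lin_char1 // mul1r lin_charM ?groupV // lin_charV.
Qed.

Lemma mul_eq_on_line (R : comPzRingType) (x y u v : R) :
  x + y = 1 -> u + v = 1 -> (x * u == y * v) = ((u, v) == (y, x)).
Proof.
move=> /(canRL (addKr x)) -> /(canRL (addKr u)) ->.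
have -> : (- x + 1) * (- u + 1) = x * u - (x + u - 1) by ring.
rewrite xpair_eqE -[X in X == _]subr0 (inj_eq (addrI _)) eqr_opp eq_sym subr_eq0.
apply/eqP/andP => [<- | [/eqP -> _]]; last exact: addNKr.
by rewrite addKr addrC addrK.
Qed.

Section JacobiSum.

Variable F : finFieldType.
Local Notation U := {unit F}.

Definition unit_line : pred (U * U) := [pred p | val p.1 + val p.2 == 1].

Lemma jacobiJ_line (a b : U -> algC) :
  jacobiJ a b = #|Fstar F|%:R^-1 * \sum_(p | unit_line p) a p.1 * b p.2.
Proof. by rewrite /jacobiJ pair_big_dep card_finField_unit. Qed.

Lemma abelian_units : abelian (Fstar F).
Proof. exact/cyclic_abelian/field_unit_group_cyclic. Qed.

Lemma mulg_eq_on_unit_line (p r : U * U) : unit_line p -> unit_line r ->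
  ((p.1 * r.1)%g == (p.2 * r.2)%g) = (r == (p.2, p.1)).
Proof.
move=> /eqP line_p /eqP line_r.
by rewrite -val_eqE /= mul_eq_on_line // !xpair_eqE -!val_eqE.
Qed.

Lemma jacobiJ_convolution (a1 a2 a3 a4 : U -> algC) :
  \sum_(i : Iirr (Fstar F))
     jacobiJ (fun x => a1 x * 'chi_i x) (fun x => a2 x * ('chi_i x)^-1) *
     jacobiJ (fun x => a3 x * 'chi_i x) (fun x => a4 x * ('chi_i x)^-1)
  = jacobiJ (fun x => a1 x * a4 x) (fun x => a2 x * a3 x).
Proof.
set n : algC := #|Fstar F|%:R.
have n_neq0 : n != 0 by rewrite pnatr_eq0 -lt0n cardG_gt0.
pose c (p r : U * U) := a1 p.1 * a2 p.2 * a3 r.1 * a4 r.2.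
have chiM (i : Iirr (Fstar F)) (p r : U * U) :
    a1 p.1 * 'chi_i p.1 * (a2 p.2 * ('chi_i p.2)^-1) *
    (a3 r.1 * 'chi_i r.1 * (a4 r.2 * ('chi_i r.2)^-1))
    = c p r * ('chi_i (p.1 * r.1)%g * ('chi_i (p.2 * r.2)%g)^-1).
  have lin_i := char_abelianP _ abelian_units i.
  by rewrite !lin_charM ?in_setT // invfM /c; ring.
transitivity (n^-1 * n^-1 * \sum_(p | unit_line p) \sum_(r | unit_line r)
                c p r * (n *+ ((p.1 * r.1)%g == (p.2 * r.2)%g))).
  under eq_bigr => i _ do rewrite !jacobiJ_line mulrACA big_distrlr.
  rewrite -mulr_sumr exchange_big; congr (_ * _); apply: eq_bigr => p _.
  rewrite exchange_big; apply: eq_bigr => r _.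
  rewrite -sum_irr_mulV_abelian ?in_setT //; last exact: abelian_units.
  by rewrite mulr_sumr; apply: eq_bigr => i _; apply: chiM.
rewrite jacobiJ_line -/n -mulrA; congr (_ * _); rewrite mulr_sumr.
apply: eq_bigr => p line_p.
under eq_bigr => r line_r do rewrite mulg_eq_on_unit_line // mulrnAr -mulrnAl.
rewrite -mulr_suml; under eq_bigr => r _ do rewrite mulrb.
rewrite -big_mkcondr (big_pred1 (p.2, p.1)) => [|r]; last first.
  by apply: andb_idl => /eqP ->; rewrite /unit_line /= addrC.
by rewrite mulrC mulfK // /c /=; ring.
Qed.

End JacobiSum.

Theorem mainTheorem4 (F : finFieldType) (a1 a2 a3 a4 : 'CF(Fstar F))
  (h1 : a1 \is a linear_char) (h2 : a2 \is a linear_char)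
  (h3 : a3 \is a linear_char) (h4 : a4 \is a linear_char) :
  \sum_(i : Iirr (Fstar F) | 'chi_i \is a linear_char)
     jacobiJ (fun x => a1 x * 'chi_i x) (fun x => a2 x * ('chi_i x)^-1) *
     jacobiJ (fun x => a3 x * 'chi_i x) (fun x => a4 x * ('chi_i x)^-1)
  = jacobiJ (fun x => a1 x * a4 x) (fun x => a2 x * a3 x).
Proof.
rewrite (eq_bigl xpredT) => [|i]; last exact/char_abelianP/abelian_units.
exact: jacobiJ_convolution.
Qed.
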